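(* Let $k$ be a commutative ring, $(H,\alpha)$ a monoidal Hom-Hopf algebra, $(A,\beta)$ a right $(H,\alpha)$-Hom-comodule algebra with a total integral $\phi:H\to A$ which is multiplicative ($\phi(hg)=\phi(h)\phi(g)$), and $(M,\mu)$ a relative Hom-Hopf module. Let $M_0=\{m\in M:\rho_M(m)=\mu^{-1}(m)\otimes 1_H\}$ and $C=\{b\in A:\rho_A(b)=\beta^{-1}(b)\otimes1_H\}$, and let $\tau_M:M\to M$, $\tau_M(m)=m_{[0]}\cdot\phi(S(m_{[1]}))$. Then: (1) $\tau_M(m)\in M_0$ for all $m\in M$, and $\tau_M|_{M_0}=\mathrm{id}_{M_0}$; (2) $\tau_A:A\to C$, $b\mapsto b_{[0]}\phi(S(b_{[1]}))$, is a morphism of left $(C,\beta)$-Hom-modules (via multiplication in $A$), so that $(C,\beta)$ is a direct summand of $(A,\beta)$ as a left $(C,\beta)$-Hom-module; (3) if moreover $\phi(H)\subseteq Z(A)$, then $\tau_M$ is a morphism of right $(C,\beta)$-Hom-modules, and the exact sequence $(M,\mu)\xrightarrow{\tau_M}(M_0,\mu)\to0$ splits as a sequence of right $(C,\beta)$-Hom-modules.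
   Context: Hom-category: objects $(M,\mu)$ with $\mu$ a $k$-linear automorphism; morphisms commute with the automorphisms. Monoidal Hom-algebra $(A,\alpha)$: $\alpha(ab)=\alpha(a)\alpha(b)$, $\alpha(1_A)=1_A$, $\alpha(a)(bc)=(ab)\alpha(c)$, $a1_A=1_Aa=\alpha(a)$. Monoidal Hom-coalgebra $(C,\gamma)$: $\Delta(c)=c_{(1)}\otimes c_{(2)}$, $\varepsilon$, $\Delta\gamma=(\gamma\otimes\gamma)\Delta$, $\varepsilon\gamma=\varepsilon$, $\gamma^{-1}(c_{(1)})\otimes c_{(2)(1)}\otimes c_{(2)(2)}=c_{(1)(1)}\otimes c_{(1)(2)}\otimes\gamma(c_{(2)})$, $\varepsilon(c_{(1)})c_{(2)}=\varepsilon(c_{(2)})c_{(1)}=\gamma^{-1}(c)$. Monoidal Hom-Hopf algebra $(H,\alpha)$: both, $\Delta,\varepsilon$ multiplicative and unital, antipode $S$ with $S(h_{(1)})h_{(2)}=h_{(1)}S(h_{(2)})=\varepsilon(h)1_H$, $S\alpha=\alpha S$. Right $(A,\beta)$-Hom-module: $(m\cdot a)\cdot\beta(b)=\mu(m)\cdot(ab)$, $m\cdot1_A=\mu(m)$, $\mu(m\cdot a)=\mu(m)\cdot\beta(a)$ (left modules analogously). Right $(H,\alpha)$-Hom-comodule: $\rho(m)=m_{[0]}\otimes m_{[1]}$, $m_{[0][0]}\otimes m_{[0][1]}\otimes\alpha^{-1}(m_{[1]})=\mu^{-1}(m_{[0]})\otimes\Delta(m_{[1]})$, $m_{[0]}\varepsilon(m_{[1]})=\mu^{-1}(m)$,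 $\rho(\mu(m))=\mu(m_{[0]})\otimes\alpha(m_{[1]})$. Right Hom-comodule algebra $(A,\beta)$: $\rho(ab)=a_{[0]}b_{[0]}\otimes a_{[1]}b_{[1]}$, $\rho(1_A)=1_A\otimes1_H$. Relative Hom-Hopf module: right $(A,\beta)$-Hom-module and right $(H,\alpha)$-Hom-comodule with $\rho(m\cdot a)=m_{[0]}\cdot a_{[0]}\otimes m_{[1]}a_{[1]}$. Total integral: $k$-linear $\phi:H\to A$ with $\rho_A\phi=(\phi\otimes\mathrm{id})\Delta$, $\phi\alpha=\beta\phi$, $\phi(1_H)=1_A$. $Z(A)$ is the center of $A$. $C$ is a Hom-subalgebra of $A$ and $(M_0,\mu|_{M_0})$ is a right $(C,\beta)$-Hom-module. *)

From HB Require Import structures.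
From mathcomp Require Import all_boot all_algebra.
Set Implicit Arguments. Unset Strict Implicit. Unset Printing Implicit Defensive.
Import GRing.Theory.
Local Open Scope ring_scope.

(* Tensors are represented by finite sums of simple tensors (sequences of   *)
(* pairs/triples); two such representatives denote the same element of the *)
(* tensor product iff every bilinear (resp. trilinear) map into every       *)
(* k-module agrees on them (universal property of the tensor product).     *)

Section HomDefs.
Variable k : comPzRingType.

Definition klinear (U V : lmodType k) (f : U -> V) : Prop :=
  forall (a : k) (x y : U), f (a *: x + y) = a *: f x + f y.

Definition klinear_form (U : lmodType k) (f : U -> k) : Prop :=
  forall (a : k) (x y : U), f (a *: x + y) = a * f x + f y.

Definition bilinear_map (U V W : lmodType k) (f : U -> V -> W) : Prop :=
  (forall y, klinear (fun x => f x y)) /\ (forall x, klinear (f x)).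

Definition trilinear_map (U V W P : lmodType k) (f : U -> V -> W -> P) : Prop :=
  [/\ forall y z, klinear (fun x => f x y z),
      forall x z, klinear (fun y => f x y z) &
      forall x y, klinear (f x y)].

Definition teq2 (U V : lmodType k) (s t : seq (U * V)) : Prop :=
  forall (W : lmodType k) (f : U -> V -> W), bilinear_map f ->
    \sum_(x <- s) f x.1 x.2 = \sum_(x <- t) f x.1 x.2.

Definition teq3 (U V W : lmodType k) (s t : seq (U * V * W)) : Prop :=
  forall (P : lmodType k) (f : U -> V -> W -> P), trilinear_map f ->
    \sum_(x <- s) f x.1.1 x.1.2 x.2 = \sum_(x <- t) f x.1.1 x.1.2 x.2.

Definition hom_aut (U : lmodType k) (mu muinv : U -> U) : Prop :=
  [/\ klinear mu, cancel mu muinv & cancel muinv mu].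

Definition tlinear (U V : lmodType k) (d : U -> seq (U * V)) : Prop :=
  forall (a : k) (x y : U),
    teq2 (d (a *: x + y)) ([seq (a *: p.1, p.2) | p <- d x] ++ d y).

Definition hom_algebra (A : lmodType k) (mul : A -> A -> A) (one : A)
    (beta betainv : A -> A) : Prop :=
  [/\ hom_aut beta betainv, bilinear_map mul,
      forall a b, beta (mul a b) = mul (beta a) (beta b),
      beta one = one &
      (forall a b c, mul (beta a) (mul b c) = mul (mul a b) (beta c)) /\
      (forall a, mul a one = beta a /\ mul one a = beta a)].

Definition hom_coalgebra (C : lmodType k) (Delta : C -> seq (C * C))
    (eps : C -> k) (g ginv : C -> C) : Prop :=
  [/\ hom_aut g ginv, tlinear Delta, klinear_form eps,
      forall c, teq2 (Delta (g c)) [seq (g p.1, g p.2) | p <- Delta c] &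
      [/\ forall c, eps (g c) = eps c,
          forall c, teq3 [seq (ginv p.1, q.1, q.2) | p <- Delta c, q <- Delta p.2]
                         [seq (q.1, q.2, g p.2) | p <- Delta c, q <- Delta p.1] &
          forall c, \sum_(p <- Delta c) eps p.1 *: p.2 = ginv c /\
                    \sum_(p <- Delta c) eps p.2 *: p.1 = ginv c]].

Definition hom_hopf (H : lmodType k) (mul : H -> H -> H) (one : H)
    (Delta : H -> seq (H * H)) (eps : H -> k) (alpha alphainv S : H -> H) : Prop :=
  [/\ hom_algebra mul one alpha alphainv, hom_coalgebra Delta eps alpha alphainv,
      (forall h g, teq2 (Delta (mul h g))
                        [seq (mul p.1 q.1, mul p.2 q.2) | p <- Delta h, q <- Delta g]) /\
      teq2 (Delta one) [:: (one, one)],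
      (forall h g, eps (mul h g) = eps h * eps g) /\ eps one = 1 &
      [/\ klinear S,
          forall h, \sum_(p <- Delta h) mul (S p.1) p.2 = eps h *: one /\
                    \sum_(p <- Delta h) mul p.1 (S p.2) = eps h *: one &
          forall h, S (alpha h) = alpha (S h)]].

Definition right_hom_module (A : lmodType k) (mulA : A -> A -> A) (oneA : A)
    (beta : A -> A) (M : lmodType k) (mu muinv : M -> M) (act : M -> A -> M) : Prop :=
  [/\ hom_aut mu muinv, bilinear_map act,
      forall m a b, act (act m a) (beta b) = act (mu m) (mulA a b),
      forall m, act m oneA = mu m &
      forall m a, mu (act m a) = act (mu m) (beta a)].

Definition right_hom_comodule (H : lmodType k) (Delta : H -> seq (H * H))
    (eps : H -> k) (alpha alphainv : H -> H)
    (M : lmodType k) (mu muinv : M -> M) (rho : M -> seq (M * H)) : Prop :=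
  [/\ hom_aut mu muinv, tlinear rho,
      forall m, teq3 [seq (q.1, q.2, alphainv p.2) | p <- rho m, q <- rho p.1]
                     [seq (muinv p.1, q.1, q.2) | p <- rho m, q <- Delta p.2],
      forall m, \sum_(p <- rho m) eps p.2 *: p.1 = muinv m &
      forall m, teq2 (rho (mu m)) [seq (mu p.1, alpha p.2) | p <- rho m]].

Definition right_hom_comodule_algebra (H : lmodType k) (mulH : H -> H -> H) (oneH : H)
    (Delta : H -> seq (H * H)) (eps : H -> k) (alpha alphainv : H -> H)
    (A : lmodType k) (mulA : A -> A -> A) (oneA : A) (beta betainv : A -> A)
    (rhoA : A -> seq (A * H)) : Prop :=
  [/\ hom_algebra mulA oneA beta betainv,
      right_hom_comodule Delta eps alpha alphainv beta betainv rhoA,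
      forall a b, teq2 (rhoA (mulA a b))
                       [seq (mulA p.1 q.1, mulH p.2 q.2) | p <- rhoA a, q <- rhoA b] &
      teq2 (rhoA oneA) [:: (oneA, oneH)]].

Definition relative_hom_hopf_module (H : lmodType k) (mulH : H -> H -> H)
    (Delta : H -> seq (H * H)) (eps : H -> k) (alpha alphainv : H -> H)
    (A : lmodType k) (mulA : A -> A -> A) (oneA : A) (beta : A -> A)
    (rhoA : A -> seq (A * H))
    (M : lmodType k) (mu muinv : M -> M) (act : M -> A -> M)
    (rhoM : M -> seq (M * H)) : Prop :=
  [/\ right_hom_module mulA oneA beta mu muinv act,
      right_hom_comodule Delta eps alpha alphainv mu muinv rhoM &
      forall m a, teq2 (rhoM (act m a))
                       [seq (act p.1 q.1, mulH p.2 q.2) | p <- rhoM m, q <- rhoA a]].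

Definition total_integral (H : lmodType k) (oneH : H) (Delta : H -> seq (H * H))
    (alpha : H -> H) (A : lmodType k) (oneA : A) (beta : A -> A)
    (rhoA : A -> seq (A * H)) (phi : H -> A) : Prop :=
  [/\ klinear phi,
      forall h, teq2 (rhoA (phi h)) [seq (phi p.1, p.2) | p <- Delta h],
      forall h, phi (alpha h) = beta (phi h) &
      phi oneH = oneA].

Definition coinv (H M : lmodType k) (oneH : H) (muinv : M -> M)
    (rho : M -> seq (M * H)) (m : M) : Prop :=
  teq2 (rho m) [:: (muinv m, oneH)].

Definition tau (H A M : lmodType k) (act : M -> A -> M) (phi : H -> A) (S : H -> H)
    (rho : M -> seq (M * H)) (m : M) : M :=
  \sum_(p <- rho m) act p.1 (phi (S p.2)).

End HomDefs.

From HB Require Import structures.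
From mathcomp Require Import all_boot all_algebra.
Set Implicit Arguments. Unset Strict Implicit. Unset Printing Implicit Defensive.
Import GRing.Theory.
Local Open Scope ring_scope.

(* The antipode of a monoidal Hom-Hopf algebra reverses comultiplication:    *)
(* in the convolution algebra of maps [H -> H ⊗ H], [Δ ∘ S] is a left and    *)
(* [(S ⊗ S) ∘ Δ^op] a right inverse of [Δ].  Hence the coaction of           *)
(* [τ(m) = m_[0] φ(S m_[1])] is [m_[0][0] φ(S m_[1](2)) ⊗ m_[0][1] S m_[1](1)],  *)
(* which coassociativity of the coaction and the antipode axiom collapse to  *)
(* [μ^{-1}(τ m) ⊗ 1]; on coinvariants [τ] is the identity since [φ(S 1) = 1]. *)
(* Taking [M = A], [τ_A] is a left [C]-linear retraction of [C ⊆ A], so its  *)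
(* kernel is a complement; when [φ] is central, [τ_M] is right [C]-linear and *)
(* the inclusion [M_0 ⊆ M] splits it.  *)

Section Multilinear.
Variable k : comPzRingType.
Implicit Types U V W : lmodType k.

Lemma klinear0 U W (f : U -> W) : klinear f -> f 0 = 0.
Proof.
move=> lf; apply: (addrI (f 0)); rewrite addr0.
by have := lf 1 0 0; rewrite !scale1r addr0.
Qed.

Lemma klinearD U W (f : U -> W) x y : klinear f -> f (x + y) = f x + f y.
Proof. by move=> lf; have := lf 1 x y; rewrite !scale1r. Qed.

Lemma klinearZ U W (f : U -> W) a x : klinear f -> f (a *: x) = a *: f x.
Proof. by move=> lf; rewrite -[a *: x]addr0 lf klinear0 // addr0. Qed.

Lemma klinearB U W (f : U -> W) x y : klinear f -> f (x - y) = f x - f y.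
Proof. by move=> lf; rewrite klinearD // -scaleN1r klinearZ // scaleN1r. Qed.

Lemma klinear_sum U W (f : U -> W) I (s : seq I) (F : I -> U) :
  klinear f -> f (\sum_(i <- s) F i) = \sum_(i <- s) f (F i).
Proof.
move=> lf; elim: s => [|i s IHs]; first by rewrite !big_nil klinear0.
by rewrite !big_cons klinearD // IHs.
Qed.

Lemma klinear_id U : klinear (@id U).
Proof. by []. Qed.

Lemma klinear_comp U V W (g : V -> W) (f : U -> V) :
  klinear g -> klinear f -> klinear (fun x => g (f x)).
Proof. by move=> lg lf a x y; rewrite lf lg. Qed.

Lemma klinear_sum_fun U W I (s : seq I) (F : I -> U -> W) :
  (forall i, klinear (F i)) -> klinear (fun x => \sum_(i <- s) F i x).
Proof.
move=> lF a x y; rewrite scaler_sumr -big_split /=.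
by apply: eq_bigr => i _; rewrite lF.
Qed.

Lemma klinear_can U (f g : U -> U) :
  klinear f -> cancel f g -> cancel g f -> klinear g.
Proof. by move=> lf fK gK a x y; apply: (can_inj fK); rewrite lf !gK. Qed.

Lemma bilinear_mapl U V W (f : U -> V -> W) y : bilinear_map f -> klinear (f^~ y).
Proof. by case. Qed.

Lemma bilinear_mapr U V W (f : U -> V -> W) x : bilinear_map f -> klinear (f x).
Proof. by case. Qed.

Lemma bilinear_map_comp U V U' V' W (f : U -> V -> W) (g : U' -> U) (h : V' -> V) :
  bilinear_map f -> klinear g -> klinear h -> bilinear_map (fun x y => f (g x) (h y)).
Proof.
move=> bf lg lh; split=> [y|x].
  exact: (klinear_comp (bilinear_mapl _ bf) lg).
exact: (klinear_comp (bilinear_mapr _ bf) lh).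
Qed.

Lemma bilinear_map_sum U V W I (s : seq I) (F : I -> U -> V -> W) :
  (forall i, bilinear_map (F i)) -> bilinear_map (fun x y => \sum_(i <- s) F i x y).
Proof.
move=> bF; split=> [y|x]; apply: klinear_sum_fun => i.
  exact: bilinear_mapl.
exact: bilinear_mapr.
Qed.

Lemma bilinear_map_swap U V W (f : U -> V -> W) :
  bilinear_map f -> bilinear_map (fun y x => f x y).
Proof. by case. Qed.

Lemma klinear_tensor_sum U V W (d : U -> seq (U * V)) (f : U -> V -> W) :
  tlinear d -> bilinear_map f -> klinear (fun u => \sum_(p <- d u) f p.1 p.2).
Proof.
move=> ld bf a x y; rewrite (ld a x y W f bf) big_cat big_map /= scaler_sumr.
by congr (_ + _); apply: eq_bigr => p _; apply: klinearZ (bilinear_mapl _ bf).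
Qed.

Lemma teq2_sym U V (s t : seq (U * V)) : teq2 s t -> teq2 t s.
Proof. by move=> st W f bf; rewrite st. Qed.

Lemma teq2_trans U V (s t u : seq (U * V)) : teq2 s t -> teq2 t u -> teq2 s u.
Proof. by move=> st tu W f bf; rewrite st // tu. Qed.

Lemma klinear_retraction_decomposition U (C : U -> Prop) (r : U -> U) :
  klinear r -> (forall x, C (r x)) -> (forall c, C c -> r c = c) ->
  forall x, exists! q : U * U, [/\ C q.1, r q.2 = 0 & x = q.1 + q.2].
Proof.
move=> lr rC rid x; exists (r x, x - r x); split.
  by split=> //=; [rewrite klinearB // (rid _ (rC x)) subrr | rewrite addrC subrK].
case=> c n [/= Cc rn0 ->].
by rewrite (klinearD _ _ lr) rid // rn0 addr0 addrAC subrr add0r.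
Qed.

End Multilinear.

Section HomHopfAlgebra.
Variables (k : comPzRingType) (H : lmodType k) (mul : H -> H -> H) (one : H)
  (Delta : H -> seq (H * H)) (eps : H -> k) (alpha alphainv S : H -> H).
Hypothesis hH : hom_hopf mul one Delta eps alpha alphainv S.

Lemma alpha_klinear : klinear alpha. Proof. by case: hH => [[[]]]. Qed.
Lemma alphaK : cancel alpha alphainv. Proof. by case: hH => [[[]]]. Qed.
Lemma alphaKV : cancel alphainv alpha. Proof. by case: hH => [[[]]]. Qed.
Lemma mul_bilinear : bilinear_map mul. Proof. by case: hH => [[]]. Qed.
Lemma alphaM a b : alpha (mul a b) = mul (alpha a) (alpha b).
Proof. by case: hH => [[]]. Qed.
Lemma alpha1 : alpha one = one. Proof. by case: hH => [[]]. Qed.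
Lemma hmulA a b c : mul (alpha a) (mul b c) = mul (mul a b) (alpha c).
Proof. by case: hH => [[_ _ _ _ []]]. Qed.
Lemma hmulr1 a : mul a one = alpha a.
Proof. by case: hH => [[_ _ _ _ [_ /(_ a) []]]]. Qed.
Lemma hmul1r a : mul one a = alpha a.
Proof. by case: hH => [[_ _ _ _ [_ /(_ a) []]]]. Qed.
Lemma Delta_tlinear : tlinear Delta. Proof. by case: hH => [_ []]. Qed.
Lemma eps_klinear : klinear (eps : H -> k^o). Proof. by case: hH => [_ []]. Qed.
Lemma Delta_alpha c : teq2 (Delta (alpha c)) [seq (alpha p.1, alpha p.2) | p <- Delta c].
Proof. by case: hH => [_ []]. Qed.
Lemma eps_alpha c : eps (alpha c) = eps c. Proof. by case: hH => [_ [_ _ _ _ []]]. Qed.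
Lemma coassoc c : teq3 [seq (alphainv p.1, q.1, q.2) | p <- Delta c, q <- Delta p.2]
                       [seq (q.1, q.2, alpha p.2) | p <- Delta c, q <- Delta p.1].
Proof. by case: hH => [_ [_ _ _ _ []]]. Qed.
Lemma counit_l c : \sum_(p <- Delta c) eps p.1 *: p.2 = alphainv c.
Proof. by case: hH => [_ [_ _ _ _ [_ _ /(_ c) []]]]. Qed.
Lemma counit_r c : \sum_(p <- Delta c) eps p.2 *: p.1 = alphainv c.
Proof. by case: hH => [_ [_ _ _ _ [_ _ /(_ c) []]]]. Qed.
Lemma Delta_mul h g : teq2 (Delta (mul h g))
  [seq (mul p.1 q.1, mul p.2 q.2) | p <- Delta h, q <- Delta g].
Proof. by case: hH => [_ _ []]. Qed.
Lemma Delta1 : teq2 (Delta one) [:: (one, one)]. Proof. by case: hH => [_ _ []]. Qed.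
Lemma eps1 : eps one = 1. Proof. by case: hH => [_ _ _ []]. Qed.
Lemma antipode_klinear : klinear S. Proof. by case: hH => [_ _ _ _ []]. Qed.
Lemma antipode_l h : \sum_(p <- Delta h) mul (S p.1) p.2 = eps h *: one.
Proof. by case: hH => [_ _ _ _ [_ /(_ h) []]]. Qed.
Lemma antipode_r h : \sum_(p <- Delta h) mul p.1 (S p.2) = eps h *: one.
Proof. by case: hH => [_ _ _ _ [_ /(_ h) []]]. Qed.
Lemma antipode_alpha h : S (alpha h) = alpha (S h).
Proof. by case: hH => [_ _ _ _ []]. Qed.

Lemma mull_klinear c : klinear (mul^~ c). Proof. exact: bilinear_mapl mul_bilinear. Qed.
Lemma mulr_klinear c : klinear (mul c). Proof. exact: bilinear_mapr mul_bilinear. Qed.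

Lemma alphainv_klinear : klinear alphainv.
Proof. exact: klinear_can alpha_klinear alphaK alphaKV. Qed.

Lemma eps_alphainv c : eps (alphainv c) = eps c.
Proof. by rewrite -{2}(alphaKV c) eps_alpha. Qed.

Lemma coassocE (P : lmodType k) (T : H -> H -> H -> P) c : trilinear_map T ->
  \sum_(p <- Delta c) \sum_(q <- Delta p.2) T (alphainv p.1) q.1 q.2 =
  \sum_(p <- Delta c) \sum_(q <- Delta p.1) T q.1 q.2 (alpha p.2).
Proof. by move=> tT; have := coassoc c tT; rewrite !big_allpairs_dep. Qed.

Lemma counit_suml (W : lmodType k) (F : H -> W) c : klinear F ->
  \sum_(p <- Delta c) eps p.1 *: F p.2 = F (alphainv c).
Proof.
by move=> lF; rewrite -counit_l klinear_sum //; apply: eq_bigr => p _; rewrite klinearZ.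
Qed.

Lemma counit_sumr (W : lmodType k) (F : H -> W) c : klinear F ->
  \sum_(p <- Delta c) eps p.2 *: F p.1 = F (alphainv c).
Proof.
by move=> lF; rewrite -counit_r klinear_sum //; apply: eq_bigr => p _; rewrite klinearZ.
Qed.

(* Applying [eps ⊗ eps ⊗ id] to coassociativity gives [alphainv^2 = id]: with *)
(* the counit normalised to [alphainv], the structure map is an involution.   *)
Lemma alphainvE c : alphainv c = alpha c.
Proof.
pose T a b c : H := eps a *: (eps b *: c).
have tT : trilinear_map T.
  split=> [y z|x z|x y] a u v; rewrite /T.
  - by rewrite eps_klinear scalerDl !scalerA.
  - by rewrite eps_klinear scalerDl scalerDr !scalerA mulrCA mulrA.
  - by rewrite !scalerDr !scalerA (mulrC a) mulrAC.
have := coassocE c tT; rewrite /T.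
under eq_bigr do rewrite -scaler_sumr counit_l eps_alphainv.
rewrite (counit_suml _ alphainv_klinear).
under eq_bigr do under eq_bigr do rewrite scalerA.
under eq_bigr do rewrite -scaler_suml.
have epsE q : \sum_(r <- Delta q) eps r.1 * eps r.2 = eps q.
  rewrite -eps_alphainv -counit_l (klinear_sum _ _ eps_klinear).
  by apply: eq_bigr => r _; rewrite (klinearZ _ _ eps_klinear).
under eq_bigr do rewrite epsE.
rewrite (counit_suml _ alpha_klinear) alphaKV => cE.
by rewrite -[in RHS]cE alphaKV.
Qed.

Lemma alpha_involutive : involutive alpha.
Proof. by move=> x; rewrite -{2}(alphaK x) alphainvE. Qed.

Lemma coassoc_alphaE (P : lmodType k) (T : H -> H -> H -> P) c : trilinear_map T ->
  \sum_(p <- Delta c) \sum_(q <- Delta p.2) T (alpha p.1) q.1 q.2 =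
  \sum_(p <- Delta c) \sum_(q <- Delta p.1) T q.1 q.2 (alpha p.2).
Proof. by move=> tT; rewrite -coassocE //; apply: eq_bigr => p _; rewrite alphainvE. Qed.

Lemma antipode_sumr (W : lmodType k) (F : H -> W) c : klinear F ->
  \sum_(p <- Delta c) F (mul p.1 (S p.2)) = eps c *: F one.
Proof. by move=> lF; rewrite -klinear_sum // antipode_r klinearZ. Qed.

Lemma antipode1 : S one = one.
Proof.
have := antipode_l one.
rewrite (Delta1 (bilinear_map_comp mul_bilinear antipode_klinear (@klinear_id _ H))).
by rewrite big_seq1 eps1 scale1r hmulr1 -antipode_alpha alpha1.
Qed.

Lemma antipode_cancell (W : lmodType k) (G : H -> H -> W) c : bilinear_map G ->
  \sum_(q <- Delta c) \sum_(r <- Delta (alpha q.2)) G r.2 (mul q.1 (S r.1)) =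
  G (alpha c) one.
Proof.
move=> bG; pose T a b d := G (alpha d) (mul (alpha a) (S (alpha b))).
have tT : trilinear_map T.
  split=> [b d|a d|a b].
  - exact: klinear_comp (bilinear_mapr _ bG) (klinear_comp (mull_klinear _) alpha_klinear).
  - exact: klinear_comp (bilinear_mapr _ bG)
      (klinear_comp (mulr_klinear _) (klinear_comp antipode_klinear alpha_klinear)).
  - exact: klinear_comp (bilinear_mapl _ bG) alpha_klinear.
transitivity (\sum_(q <- Delta c) \sum_(r <- Delta q.2) T (alpha q.1) r.1 r.2).
  apply: eq_bigr => q _; rewrite (Delta_alpha q.2 (bilinear_map_swap
    (bilinear_map_comp bG (@klinear_id _ H)
       (klinear_comp (mulr_klinear q.1) antipode_klinear)))) big_map.
  by apply: eq_bigr => r _; rewrite /T alpha_involutive.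
rewrite coassoc_alphaE // -(alphainvE c) -(counit_suml _ (bilinear_mapl one bG)).
apply: eq_bigr => q _; rewrite /T alpha_involutive.
under eq_bigr do rewrite antipode_alpha -alphaM.
rewrite (antipode_sumr _ (klinear_comp (bilinear_mapr _ bG) alpha_klinear)).
by rewrite alpha1.
Qed.

Lemma antipode_cancelr (W : lmodType k) (G : H -> H -> W) c : bilinear_map G ->
  \sum_(q <- Delta c) \sum_(r <- Delta (alpha q.1)) G r.1 (mul r.2 (S q.2)) =
  G (alpha c) one.
Proof.
move=> bG; pose T a b d := G (alpha a) (mul (alpha b) (S (alpha d))).
have tT : trilinear_map T.
  split=> [b d|a d|a b].
  - exact: klinear_comp (bilinear_mapl _ bG) alpha_klinear.
  - exact: klinear_comp (bilinear_mapr _ bG) (klinear_comp (mull_klinear _) alpha_klinear).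
  - exact: klinear_comp (bilinear_mapr _ bG)
      (klinear_comp (mulr_klinear _) (klinear_comp antipode_klinear alpha_klinear)).
transitivity (\sum_(q <- Delta c) \sum_(r <- Delta q.1) T r.1 r.2 (alpha q.2)).
  apply: eq_bigr => q _; rewrite (Delta_alpha q.1
    (bilinear_map_comp bG (@klinear_id _ H) (mull_klinear (S q.2)))) big_map.
  by apply: eq_bigr => r _; rewrite /T alpha_involutive.
rewrite -coassoc_alphaE // -(alphainvE c) -(counit_sumr _ (bilinear_mapl one bG)).
apply: eq_bigr => q _; rewrite /T alpha_involutive.
under eq_bigr do rewrite antipode_alpha -alphaM.
rewrite (antipode_sumr _ (klinear_comp (bilinear_mapr _ bG) alpha_klinear)).
by rewrite alpha1.
Qed.

Local Notation tensor := (seq (H * H)).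
Local Notation eval2 f X := (\sum_(x <- X) f x.1 x.2).

Definition tensor_mul (X Y : tensor) : tensor :=
  [seq (mul x.1 y.1, mul x.2 y.2) | x <- X, y <- Y].
Definition tensor_map (g : H -> H) (X : tensor) : tensor := [seq (g x.1, g x.2) | x <- X].
Definition unit_tensor (h : H) : tensor := [:: (eps h *: one, one)].
Definition conv (P Q : H -> tensor) (h : H) : tensor :=
  flatten [seq tensor_mul (P p.1) (Q p.2) | p <- Delta h].
Definition twist (P : H -> tensor) (h : H) : tensor := tensor_map alpha (P (alpha h)).
Definition tensor_klinear (P : H -> tensor) := forall (W : lmodType k) (f : H -> H -> W),
  bilinear_map f -> klinear (fun h => eval2 f (P h)).

Lemma eval2_tensor_mul (W : lmodType k) (f : H -> H -> W) X Y :
  eval2 f (tensor_mul X Y) = \sum_(x <- X) \sum_(y <- Y) f (mul x.1 y.1) (mul x.2 y.2).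
Proof. exact: big_allpairs_dep. Qed.

Lemma eval2_conv (W : lmodType k) (f : H -> H -> W) P Q h :
  eval2 f (conv P Q h) = \sum_(p <- Delta h) eval2 f (tensor_mul (P p.1) (Q p.2)).
Proof. by rewrite big_flatten big_map. Qed.

Lemma tensor_mul_teq X X' Y Y' :
  teq2 X X' -> teq2 Y Y' -> teq2 (tensor_mul X Y) (tensor_mul X' Y').
Proof.
move=> XX' YY' W f bf; rewrite !eval2_tensor_mul.
rewrite (XX' W (fun a b => \sum_(y <- Y) f (mul a y.1) (mul b y.2))); last first.
  by apply: bilinear_map_sum => y; apply: bilinear_map_comp => //; apply: mull_klinear.
apply: eq_bigr => x _; apply: (YY' W (fun a b => f (mul x.1 a) (mul x.2 b))).
by apply: bilinear_map_comp => //; apply: mulr_klinear.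
Qed.

Lemma conv_teq P P' Q Q' h : (forall x, teq2 (P x) (P' x)) ->
  (forall x, teq2 (Q x) (Q' x)) -> teq2 (conv P Q h) (conv P' Q' h).
Proof.
move=> PP' QQ' W f bf; rewrite !eval2_conv.
by apply: eq_bigr => p _; apply: tensor_mul_teq.
Qed.

Lemma conv_unitr P h : tensor_klinear P -> teq2 (conv P unit_tensor h) (twist P h).
Proof.
move=> lP W f bf; rewrite eval2_conv big_map.
have lPa := lP W _ (bilinear_map_comp bf alpha_klinear alpha_klinear).
rewrite -alphainvE -(counit_sumr _ lPa); apply: eq_bigr => p _.
rewrite eval2_tensor_mul scaler_sumr; apply: eq_bigr => x _.
rewrite big_seq1 /= (klinearZ _ _ (mulr_klinear _)) !hmulr1.
exact: klinearZ (bilinear_mapl _ bf).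
Qed.

Lemma conv_unitl P h : tensor_klinear P -> teq2 (conv unit_tensor P h) (twist P h).
Proof.
move=> lP W f bf; rewrite eval2_conv big_map.
have lPa := lP W _ (bilinear_map_comp bf alpha_klinear alpha_klinear).
rewrite -alphainvE -(counit_suml _ lPa); apply: eq_bigr => p _.
rewrite eval2_tensor_mul big_seq1 scaler_sumr; apply: eq_bigr => x _.
rewrite /= (klinearZ _ _ (mull_klinear _)) !hmul1r.
exact: klinearZ (bilinear_mapl _ bf).
Qed.

Lemma conv_hassoc P Q R h :
  tensor_klinear P -> tensor_klinear Q -> tensor_klinear R ->
  teq2 (conv (twist P) (conv Q R) h) (conv (conv P Q) (twist R) h).
Proof.
move=> lP lQ lR W f bf; rewrite !eval2_conv.
pose T a b c := \sum_(x <- P a) \sum_(y <- Q b) \sum_(z <- R c)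
   f (mul (alpha x.1) (mul y.1 z.1)) (mul (alpha x.2) (mul y.2 z.2)).
have tT : trilinear_map T.
  split=> [b c|a c|a b].
  - apply: (lP W (fun u v => \sum_(y <- Q b) \sum_(z <- R c)
       f (mul (alpha u) (mul y.1 z.1)) (mul (alpha v) (mul y.2 z.2)))).
    apply: bilinear_map_sum => y; apply: bilinear_map_sum => z.
    by apply: bilinear_map_comp => //; apply: klinear_comp (mull_klinear _) alpha_klinear.
  - apply: klinear_sum_fun => x.
    apply: (lQ W (fun u v => \sum_(z <- R c)
       f (mul (alpha x.1) (mul u z.1)) (mul (alpha x.2) (mul v z.2)))).
    apply: bilinear_map_sum => z.
    by apply: bilinear_map_comp => //; apply: klinear_comp (mulr_klinear _) (mull_klinear _).
  - apply: klinear_sum_fun => x; apply: klinear_sum_fun => y.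
    apply: (lR W (fun u v => f (mul (alpha x.1) (mul y.1 u)) (mul (alpha x.2) (mul y.2 v)))).
    by apply: bilinear_map_comp => //; apply: klinear_comp (mulr_klinear _) (mulr_klinear _).
transitivity (\sum_(p <- Delta h) \sum_(q <- Delta p.2) T (alpha p.1) q.1 q.2).
  apply: eq_bigr => p _; rewrite eval2_tensor_mul big_map.
  under eq_bigr do rewrite big_flatten big_map.
  rewrite exchange_big; apply: eq_bigr => q _ /=.
  by apply: eq_bigr => x _; rewrite big_allpairs_dep.
rewrite coassoc_alphaE //; apply: eq_bigr => p _.
rewrite eval2_tensor_mul big_flatten big_map; apply: eq_bigr => q _ /=.
rewrite big_allpairs_dep; apply: eq_bigr => x _; apply: eq_bigr => y _.
by rewrite big_map; apply: eq_bigr => z _; rewrite !hmulA.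
Qed.

Definition Delta_S (h : H) : tensor := Delta (S h).
Definition S_Delta_op (h : H) : tensor := [seq (S p.2, S p.1) | p <- Delta h].

Lemma Delta_tensor_klinear : tensor_klinear Delta.
Proof. by move=> W f bf; apply: klinear_tensor_sum Delta_tlinear bf. Qed.

Lemma Delta_S_tensor_klinear : tensor_klinear Delta_S.
Proof.
move=> W f bf.
exact: klinear_comp (klinear_tensor_sum Delta_tlinear bf) antipode_klinear.
Qed.

Lemma S_Delta_op_tensor_klinear : tensor_klinear S_Delta_op.
Proof.
move=> W f bf a x y; rewrite !big_map.
exact: (klinear_tensor_sum Delta_tlinear
  (bilinear_map_comp (bilinear_map_swap bf) antipode_klinear antipode_klinear) a x y).
Qed.

Lemma Delta_S_twist h : teq2 (Delta_S h) (twist Delta_S h).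
Proof.
move=> W f bf; rewrite big_map /Delta_S antipode_alpha.
rewrite (Delta_alpha _ (bilinear_map_comp bf alpha_klinear alpha_klinear)) big_map.
by apply: eq_bigr => p _; rewrite /= !alpha_involutive.
Qed.

Lemma S_Delta_op_twist h : teq2 (S_Delta_op h) (twist S_Delta_op h).
Proof.
move=> W f bf; rewrite !big_map.
rewrite (Delta_alpha _ (bilinear_map_comp (bilinear_map_swap bf)
  (klinear_comp alpha_klinear antipode_klinear)
  (klinear_comp alpha_klinear antipode_klinear))) big_map.
by apply: eq_bigr => p _; rewrite /= !antipode_alpha !alpha_involutive.
Qed.

Lemma conv_Delta_S_Delta h : teq2 (conv Delta_S Delta h) (unit_tensor h).
Proof.
move=> W f bf; rewrite eval2_conv big_seq1.
transitivity (\sum_(p <- Delta h) eval2 f (Delta (mul (S p.1) p.2))).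
  by apply: eq_bigr => p _; rewrite (Delta_mul _ _ bf).
rewrite -(klinear_sum _ _ (klinear_tensor_sum Delta_tlinear bf)) antipode_l.
rewrite (klinearZ _ _ (klinear_tensor_sum Delta_tlinear bf)) (Delta1 bf) big_seq1.
by rewrite (klinearZ _ _ (bilinear_mapl _ bf)).
Qed.

(* After re-bracketing by coassociativity, [p.1.2 * S p.2.1] is an antipode *)
(* contraction of a single coproduct; then [p.1.1 * S p.2.2] contracts too.  *)
Lemma conv_Delta_S_Delta_op h : teq2 (conv Delta S_Delta_op h) (unit_tensor h).
Proof.
move=> W f bf; rewrite eval2_conv big_seq1 /=.
pose T a b c := \sum_(d <- Delta (alpha a)) f (mul d.1 (S c)) (mul d.2 (S b)).
have tT : trilinear_map T.
  split=> [b c|a c|a b].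
  - exact: klinear_comp (klinear_tensor_sum Delta_tlinear
      (bilinear_map_comp bf (mull_klinear _) (mull_klinear _))) alpha_klinear.
  - apply: klinear_sum_fun => d.
    exact: klinear_comp (bilinear_mapr _ bf) (klinear_comp (mulr_klinear _) antipode_klinear).
  - apply: klinear_sum_fun => d.
    exact: klinear_comp (bilinear_mapl _ bf) (klinear_comp (mulr_klinear _) antipode_klinear).
transitivity (\sum_(p <- Delta h) \sum_(q <- Delta p.2) T (alpha p.1) q.1 q.2).
  apply: eq_bigr => p _; rewrite eval2_tensor_mul.
  under eq_bigr do rewrite big_map.
  by rewrite exchange_big; apply: eq_bigr => q _; rewrite /T alpha_involutive.
rewrite coassoc_alphaE // /T.
under eq_bigr => p _ do rewrite (antipode_cancelr _
  (bilinear_map_comp bf (mull_klinear (S (alpha p.2))) (@klinear_id _ H))).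
under eq_bigr do rewrite antipode_alpha -alphaM.
rewrite (antipode_sumr _ (klinear_comp (bilinear_mapl one bf) alpha_klinear)).
by rewrite alpha1 (klinearZ _ _ (bilinear_mapl _ bf)).
Qed.

Lemma Delta_antipode_teq h : teq2 (Delta_S h) (S_Delta_op h).
Proof.
apply: teq2_trans (Delta_S_twist h) _.
apply: teq2_trans (teq2_sym (conv_unitr h Delta_S_tensor_klinear)) _.
apply: teq2_trans (conv_teq (P' := twist Delta_S) (Q' := conv Delta S_Delta_op) h
  Delta_S_twist (fun x => teq2_sym (conv_Delta_S_Delta_op x))) _.
apply: teq2_trans (conv_hassoc h Delta_S_tensor_klinear
  Delta_tensor_klinear S_Delta_op_tensor_klinear) _.
apply: teq2_trans (conv_teq (P' := unit_tensor) (Q' := S_Delta_op) h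
  conv_Delta_S_Delta (fun x => teq2_sym (S_Delta_op_twist x))) _.
exact: teq2_trans (conv_unitl h S_Delta_op_tensor_klinear) (teq2_sym (S_Delta_op_twist h)).
Qed.

Lemma Delta_antipodeE (W : lmodType k) (f : H -> H -> W) h : bilinear_map f ->
  \sum_(q <- Delta (S h)) f q.1 q.2 = \sum_(q <- Delta h) f (S q.2) (S q.1).
Proof. by move=> bf; rewrite (Delta_antipode_teq h bf) big_map. Qed.

End HomHopfAlgebra.

Section RelativeHopfModule.
Variables (k : comPzRingType) (H : lmodType k) (mulH : H -> H -> H) (oneH : H)
  (Delta : H -> seq (H * H)) (eps : H -> k) (alpha alphainv S : H -> H).
Hypothesis hH : hom_hopf mulH oneH Delta eps alpha alphainv S.
Variables (A : lmodType k) (mulA : A -> A -> A) (oneA : A) (beta : A -> A)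
  (rhoA : A -> seq (A * H)) (phi : H -> A).
Hypothesis hphi : total_integral oneH Delta alpha oneA beta rhoA phi.
Variables (M : lmodType k) (mu muinv : M -> M) (act : M -> A -> M)
  (rhoM : M -> seq (M * H)).
Hypothesis hM : relative_hom_hopf_module mulH Delta eps alpha alphainv
  mulA oneA beta rhoA mu muinv act rhoM.

Lemma phi_klinear : klinear phi. Proof. by case: hphi. Qed.
Lemma phi_comodule h : teq2 (rhoA (phi h)) [seq (phi p.1, p.2) | p <- Delta h].
Proof. by case: hphi. Qed.
Lemma phi_alpha h : phi (alpha h) = beta (phi h). Proof. by case: hphi. Qed.
Lemma phi1 : phi oneH = oneA. Proof. by case: hphi. Qed.

Lemma mu_klinear : klinear mu. Proof. by case: hM => [[[]]]. Qed.
Lemma muK : cancel mu muinv. Proof. by case: hM => [[[]]]. Qed.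
Lemma muKV : cancel muinv mu. Proof. by case: hM => [[[]]]. Qed.
Lemma act_bilinear : bilinear_map act. Proof. by case: hM => [[]]. Qed.
Lemma act_hassoc m a b : act (act m a) (beta b) = act (mu m) (mulA a b).
Proof. by case: hM => [[]]. Qed.
Lemma act1 m : act m oneA = mu m. Proof. by case: hM => [[]]. Qed.
Lemma mu_act m a : mu (act m a) = act (mu m) (beta a). Proof. by case: hM => [[]]. Qed.
Lemma rhoM_tlinear : tlinear rhoM. Proof. by case: hM => [_ []]. Qed.
Lemma rhoM_coassoc m :
  teq3 [seq (q.1, q.2, alphainv p.2) | p <- rhoM m, q <- rhoM p.1]
       [seq (muinv p.1, q.1, q.2) | p <- rhoM m, q <- Delta p.2].
Proof. by case: hM => [_ []]. Qed.
Lemma rhoM_mu m : teq2 (rhoM (mu m)) [seq (mu p.1, alpha p.2) | p <- rhoM m].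
Proof. by case: hM => [_ []]. Qed.
Lemma rhoM_act m a :
  teq2 (rhoM (act m a)) [seq (act p.1 q.1, mulH p.2 q.2) | p <- rhoM m, q <- rhoA a].
Proof. by case: hM. Qed.

Local Notation tauM := (tau act phi S rhoM).

Let act_phi_S_bilinear : bilinear_map (fun x h => act x (phi (S h))).
Proof.
exact: bilinear_map_comp act_bilinear (@klinear_id _ M)
  (klinear_comp phi_klinear (antipode_klinear hH)).
Qed.

Lemma tau_klinear : klinear tauM.
Proof. exact: klinear_tensor_sum rhoM_tlinear act_phi_S_bilinear. Qed.

Lemma tau_mu m : tauM (mu m) = mu (tauM m).
Proof.
rewrite /tau (rhoM_mu m act_phi_S_bilinear) big_map (klinear_sum _ _ mu_klinear).
by apply: eq_bigr => p _; rewrite /= (antipode_alpha hH) phi_alpha mu_act.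
Qed.

Lemma tau_muinv m : tauM (muinv m) = muinv (tauM m).
Proof. by apply: (can_inj muK); rewrite -tau_mu !muKV. Qed.

Lemma tau_id m : coinv oneH muinv rhoM m -> tauM m = m.
Proof.
move=> m0; rewrite /tau (m0 _ _ act_phi_S_bilinear) big_seq1 /=.
by rewrite (antipode1 hH) phi1 act1 muKV.
Qed.

Lemma rho_tau (W : lmodType k) (f : M -> H -> W) m : bilinear_map f ->
  \sum_(q <- rhoM (tauM m)) f q.1 q.2 =
  \sum_(p <- rhoM m) \sum_(p' <- rhoM p.1) \sum_(q <- Delta p.2)
    f (act p'.1 (phi (S q.2))) (mulH p'.2 (S q.1)).
Proof.
move=> bf; rewrite (klinear_sum _ _ (klinear_tensor_sum rhoM_tlinear bf)).
apply: eq_bigr => p _; rewrite (rhoM_act _ _ bf) big_allpairs_dep.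
apply: eq_bigr => p' _; rewrite (phi_comodule _
  (bilinear_map_comp bf (bilinear_mapr p'.1 act_bilinear) (mulr_klinear hH p'.2))).
rewrite big_map (Delta_antipodeE hH (f := fun u v => f (act p'.1 (phi u)) (mulH p'.2 v))) //.
exact: bilinear_map_comp bf (klinear_comp (bilinear_mapr p'.1 act_bilinear) phi_klinear)
  (mulr_klinear hH p'.2).
Qed.

Lemma muinv_act_phi_S m h : muinv (act m (phi (S h))) = act (muinv m) (phi (S (alpha h))).
Proof.
apply: (can_inj muK); rewrite muKV mu_act muKV -phi_alpha (antipode_alpha hH).
by rewrite (alpha_involutive hH).
Qed.

Lemma tau_coinv m : coinv oneH muinv rhoM (tauM m).
Proof.
move=> W f bf; rewrite big_seq1 rho_tau //.
pose T x y c := \sum_(q <- Delta (alpha c)) f (act x (phi (S q.2))) (mulH y (S q.1)).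
have tT : trilinear_map T.
  split=> [y c|x c|x y].
  - apply: klinear_sum_fun => q.
    exact: klinear_comp (bilinear_mapl _ bf) (bilinear_mapl _ act_bilinear).
  - apply: klinear_sum_fun => q.
    exact: klinear_comp (bilinear_mapr _ bf) (mull_klinear hH _).
  - have bg := bilinear_map_comp bf
      (klinear_comp (bilinear_mapr x act_bilinear)
         (klinear_comp phi_klinear (antipode_klinear hH)))
      (klinear_comp (mulr_klinear hH y) (antipode_klinear hH)).
    exact: klinear_comp (klinear_tensor_sum (Delta_tlinear hH) (bilinear_map_swap bg))
      (alpha_klinear hH).
transitivity (\sum_(p <- rhoM m) \sum_(p' <- rhoM p.1) T p'.1 p'.2 (alphainv p.2)).
  by apply: eq_bigr => p _; apply: eq_bigr => p' _; rewrite /T (alphaKV hH).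
have := rhoM_coassoc m tT; rewrite !big_allpairs_dep /= => -> {tT}.
rewrite /tau (klinear_sum _ _ (klinear_comp (bilinear_mapl oneH bf)
  (klinear_can mu_klinear muK muKV))).
apply: eq_bigr => p _; rewrite muinv_act_phi_S /T.
apply: (antipode_cancell hH) (bilinear_map_comp bf
  (klinear_comp (bilinear_mapr _ act_bilinear) (klinear_comp phi_klinear (antipode_klinear hH)))
  (@klinear_id _ H)).
Qed.

Lemma tau_act_coinv (betainv : A -> A) m c : cancel betainv beta ->
  (forall h a, mulA (phi h) a = mulA a (phi h)) ->
  coinv oneH betainv rhoA c -> tauM (act m c) = act (tauM m) c.
Proof.
move=> betaKV phi_central c0.
rewrite /tau (rhoM_act m c act_phi_S_bilinear) big_allpairs_dep.
rewrite (klinear_sum _ _ (bilinear_mapl c act_bilinear)); apply: eq_bigr => p _.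
rewrite (c0 _ _ (bilinear_map_comp act_bilinear (bilinear_mapr p.1 act_bilinear)
  (klinear_comp phi_klinear (klinear_comp (antipode_klinear hH) (mulr_klinear hH p.2))))).
rewrite big_seq1 /= (hmulr1 hH) (antipode_alpha hH) phi_alpha act_hassoc.
by rewrite -phi_central -act_hassoc betaKV.
Qed.

End RelativeHopfModule.

Section ComoduleAlgebra.
Variables (k : comPzRingType) (H : lmodType k) (mulH : H -> H -> H) (oneH : H)
  (Delta : H -> seq (H * H)) (eps : H -> k) (alpha alphainv S : H -> H).
Hypothesis hH : hom_hopf mulH oneH Delta eps alpha alphainv S.
Variables (A : lmodType k) (mulA : A -> A -> A) (oneA : A) (beta betainv : A -> A)
  (rhoA : A -> seq (A * H)).
Hypothesis hA : right_hom_comodule_algebra mulH oneH Delta eps alpha alphainv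
  mulA oneA beta betainv rhoA.
Variable phi : H -> A.
Hypothesis hphi : total_integral oneH Delta alpha oneA beta rhoA phi.

Lemma beta_klinear : klinear beta. Proof. by case: hA => [[[]]]. Qed.
Lemma betaK : cancel beta betainv. Proof. by case: hA => [[[]]]. Qed.
Lemma betaKV : cancel betainv beta. Proof. by case: hA => [[[]]]. Qed.
Lemma betainv_klinear : klinear betainv.
Proof. exact: klinear_can beta_klinear betaK betaKV. Qed.
Lemma mulA_bilinear : bilinear_map mulA. Proof. by case: hA => [[]]. Qed.
Lemma mulA_hassoc a b c : mulA (beta a) (mulA b c) = mulA (mulA a b) (beta c).
Proof. by case: hA => [[_ _ _ _ []]]. Qed.
Lemma rhoA_mul a b :
  teq2 (rhoA (mulA a b)) [seq (mulA p.1 q.1, mulH p.2 q.2) | p <- rhoA a, q <- rhoA b].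
Proof. by case: hA. Qed.

Lemma comodule_algebra_relative_hopf_module :
  relative_hom_hopf_module mulH Delta eps alpha alphainv
    mulA oneA beta rhoA beta betainv mulA rhoA.
Proof. by case: hA => [[? ? ? ? [? unit]] ? ? ?]; split=> //; split=> // a; case: (unit a). Qed.

Lemma tau_mul_coinv c b : coinv oneH betainv rhoA c ->
  tau mulA phi S rhoA (mulA c b) = mulA c (tau mulA phi S rhoA b).
Proof.
move=> c0.
have bg : bilinear_map (fun a h => mulA a (phi (S h))).
  exact: bilinear_map_comp mulA_bilinear (@klinear_id _ A)
    (klinear_comp (phi_klinear hphi) (antipode_klinear hH)).
rewrite /tau (rhoA_mul c b bg) big_allpairs_dep.
rewrite (c0 _ (fun a h => \sum_(q <- rhoA b) mulA (mulA a q.1) (phi (S (mulH h q.2))))).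
  rewrite big_seq1 (klinear_sum _ _ (bilinear_mapr c mulA_bilinear)).
  apply: eq_bigr => q _.
  by rewrite /= (hmul1r hH) (antipode_alpha hH) (phi_alpha hphi) -mulA_hassoc betaKV.
apply: bilinear_map_sum => q; apply: bilinear_map_comp mulA_bilinear
  (bilinear_mapl q.1 mulA_bilinear) _.
exact: klinear_comp (phi_klinear hphi)
  (klinear_comp (antipode_klinear hH) (mull_klinear hH q.2)).
Qed.

End ComoduleAlgebra.

Unset Implicit Arguments.

Theorem proposition4p5 (k : comPzRingType)
  (H : lmodType k) (mulH : H -> H -> H) (oneH : H) (DeltaH : H -> seq (H * H))
  (epsH : H -> k) (alpha alphainv S : H -> H)
  (hH : hom_hopf mulH oneH DeltaH epsH alpha alphainv S)
  (A : lmodType k) (mulA : A -> A -> A) (oneA : A) (beta betainv : A -> A)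
  (rhoA : A -> seq (A * H))
  (hA : right_hom_comodule_algebra mulH oneH DeltaH epsH alpha alphainv
          mulA oneA beta betainv rhoA)
  (phi : H -> A)
  (hphi : total_integral oneH DeltaH alpha oneA beta rhoA phi)
  (hphi_mul : forall h g, phi (mulH h g) = mulA (phi h) (phi g))
  (M : lmodType k) (mu muinv : M -> M) (act : M -> A -> M) (rhoM : M -> seq (M * H))
  (hM : relative_hom_hopf_module mulH DeltaH epsH alpha alphainv
          mulA oneA beta rhoA mu muinv act rhoM) :
  let M0 := coinv oneH muinv rhoM in
  let C := coinv oneH betainv rhoA in
  let tauM := tau act phi S rhoM in
  let tauA := tau mulA phi S rhoA in
  (* (1) *)
  ((forall m, M0 (tauM m)) /\ (forall m, M0 m -> tauM m = m)) /\
  (* (2) tau_A : A -> C is a morphism of left (C,beta)-Hom-modules ... *)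
  ((forall b, C (tauA b)) /\ klinear tauA /\
   (forall b, tauA (beta b) = beta (tauA b)) /\
   (forall c b, C c -> tauA (mulA c b) = mulA c (tauA b)) /\
   (* ... which is a retraction of the inclusion C -> A *)
   (forall c, C c -> tauA c = c) /\
   (* so (C,beta) is a direct summand of (A,beta) as left (C,beta)-Hom-module *)
   (exists N : A -> Prop,
      [/\ N 0, (forall a x y, N x -> N y -> N (a *: x + y)),
          (forall x, N x -> N (beta x) /\ N (betainv x)),
          (forall c x, C c -> N x -> N (mulA c x)) &
          forall b, exists! p : A * A, [/\ C p.1, N p.2 & b = p.1 + p.2]])) /\
  (* (3) *)
  ((forall h a, mulA (phi h) a = mulA a (phi h)) ->
   klinear tauM /\
   (forall m, tauM (mu m) = mu (tauM m)) /\
   (forall m c, C c -> tauM (act m c) = act (tauM m) c) /\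
   (* the sequence M --tauM--> M0 --> 0 splits as right (C,beta)-Hom-modules *)
   (exists s : M -> M,
      [/\ forall m, M0 m -> tauM (s m) = m,
          forall a m n, M0 m -> M0 n -> s (a *: m + n) = a *: s m + s n,
          forall m, M0 m -> s (mu m) = mu (s m) &
          forall m c, M0 m -> C c -> s (act m c) = act (s m) c])).
Proof.
move=> M0 C tauM tauA.
have hAA := comodule_algebra_relative_hopf_module hA.
have tauA_klinear : klinear tauA := tau_klinear hH hphi hAA.
have tauA_beta : forall b, tauA (beta b) = beta (tauA b) := tau_mu hH hphi hAA.
have tauA_betainv : forall b, tauA (betainv b) = betainv (tauA b) :=
  tau_muinv hH hphi hAA.
have tauA_coinv : forall b, C (tauA b) := tau_coinv hH hphi hAA.
have tauA_id : forall c, C c -> tauA c = c := tau_id hH hphi hAA.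
have tauA_mul : forall c b, C c -> tauA (mulA c b) = mulA c (tauA b) :=
  fun c b => tau_mul_coinv hH hA hphi b.
have tauM_coinv : forall m, M0 (tauM m) := tau_coinv hH hphi hM.
have tauM_id : forall m, M0 m -> tauM m = m := tau_id hH hphi hM.
split=> //; split.
  do 5 (split=> //); exists (fun x => tauA x = 0); split.
  - exact: klinear0.
  - by move=> a x y x0 y0; rewrite tauA_klinear x0 y0 scaler0 addr0.
  - move=> x x0; rewrite tauA_beta tauA_betainv x0.
    by rewrite (klinear0 (beta_klinear hA)) (klinear0 (betainv_klinear hA)).
  - by move=> c x c0 x0; rewrite tauA_mul // x0 (klinear0 (bilinear_mapr c (mulA_bilinear hA))).
  - exact: klinear_retraction_decomposition.
move=> phi_central; split; first exact: (tau_klinear hH hphi hM).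
split; first exact: (tau_mu hH hphi hM).
split; first by move=> m c; exact: (tau_act_coinv hH hphi hM m (betaKV hA) phi_central).
by exists id.
Qed.
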